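(* Let $\rho_{Q^n}$ be an arbitrary normalized state on $Q^{\otimes n}$. Suppose the $i$th subsystem is measured with a two-outcome POVM $\{P(i),I-P(i)\}$, and let $\boldsymbol N_P$ be the number of first outcomes; similarly, with POVMs $\{P'(i),I-P'(i)\}$, let $\boldsymbol N_{P'}$ be the number of first outcomes. Suppose for every $i$ there is $0\le\tilde P(i)\le I$ with $P(i)\le\tilde P(i)$, $P'(i)\le\tilde P(i)$ and $\|\tilde P(i)-P(i)\|_\infty\le\delta$. Then $$\Pr\Big(\frac{\boldsymbol N_{P'}}{n}\ge e+\delta+c\Big)\le\Pr\Big(\frac{\boldsymbol N_P}{n}\ge e\Big)+\sum_{i=n(\delta+c)}^{n}\binom ni\delta^i(1-\delta)^{n-i}$$ (sum over integers $i$ with $n(\delta+c)\le i\le n$). *)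

From HB Require Import structures.
From mathcomp Require Import all_boot all_order all_algebra.
Set Implicit Arguments. Unset Strict Implicit. Unset Printing Implicit Defensive.
Import Order.TTheory GRing.Theory Num.Theory.
Local Open Scope ring_scope.

Section Quantum.
Variable C : numClosedFieldType.

Definition psd (I : finType) (A : I -> I -> C) : Prop :=
  forall v : I -> C, 0 <= \sum_(a : I) \sum_(b : I) (v a)^* * A a b * v b.

Definition loewner_le (d : nat) (A B : 'M[C]_d) : Prop :=
  psd (fun a b : 'I_d => B a b - A a b).

Definition effect (d : nat) (A : 'M[C]_d) : Prop :=
  loewner_le 0 A /\ loewner_le A 1%:M.

Definition vnorm (d : nat) (v : 'I_d -> C) : C :=
  sqrtC (\sum_(a < d) `|v a| ^+ 2).

Definition opnorm_le (d : nat) (A : 'M[C]_d) (t : C) : Prop :=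
  forall v : 'I_d -> C, vnorm (fun a => \sum_(b < d) A a b * v b) <= t * vnorm v.

(* basis index of Q^{(x) n}, Q of dimension d *)
Definition tidx (n d : nat) := {ffun 'I_n -> 'I_d}.

Definition density (n d : nat) (rho : tidx n d -> tidx n d -> C) : Prop :=
  psd rho /\ \sum_(x : tidx n d) rho x x = 1.

Definition povm_el (d : nat) (Pi : 'M[C]_d) (b : bool) : 'M[C]_d :=
  if b then Pi else 1%:M - Pi.

(* Born probability of the joint outcome: s = set of sites with first outcome;
   Tr(rho (E_1 (x) ... (x) E_n)) *)
Definition outcome_prob (n d : nat) (rho : tidx n d -> tidx n d -> C)
    (P : 'I_n -> 'M[C]_d) (s : {set 'I_n}) : C :=
  \sum_(x : tidx n d) \sum_(y : tidx n d)
     rho x y * \prod_(i < n) povm_el (P i) (i \in s) (y i) (x i).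

(* Pr( A (N_P) ) where N_P is the number of first outcomes *)
Definition probN (n d : nat) (rho : tidx n d -> tidx n d -> C)
    (P : 'I_n -> 'M[C]_d) (A : nat -> bool) : C :=
  \sum_(s : {set 'I_n} | A #|s|) outcome_prob rho P s.

Definition binom_tail (n : nat) (delta t : C) : C :=
  \sum_(i < n.+1 | n%:R * t <= i%:R)
     'C(n, i)%:R * delta ^+ i * (1 - delta) ^+ (n - i).

End Quantum.

From HB Require Import structures.
From mathcomp Require Import all_boot all_order all_algebra ring.
Import Order.TTheory GRing.Theory Num.Theory.
Local Open Scope ring_scope.
Set Implicit Arguments. Unset Strict Implicit. Unset Printing Implicit Defensive.

(* Measure each site with the three-outcome POVM {P, D, I - Pt}, D = Pt - P,
   and let N_0, N_1 count the first two outcomes: N_0 is distributed as N_P,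
   N_1 as N_D and N_0 + N_1 as N_Pt, so N_Pt >= n(e + delta + c) forces
   N_P >= n e or N_D >= n(delta + c) on one probability space.
   The same refinement with {P', Pt - P', I - Pt} shows that N_P' is
   stochastically dominated by N_Pt, and with {D, delta I - D, (1 - delta) I}
   (note D <= delta I because ||D|| <= delta) that N_D is dominated by
   N_(delta I), which is Binomial(n, delta).  Every refined outcome has
   probability Tr(rho (E_1 (x) ... (x) E_n)) >= 0 for positive E_i, as one sees
   by writing each E_i as a sum of rank-one operators u u^*. *)

Section PositiveSemidefinite.
Variable C : numClosedFieldType.

Definition qform (I : finType) (A : I -> I -> C) (v : I -> C) : C :=
  \sum_a \sum_b (v a)^* * A a b * v b.

Lemma eq_psd (I : finType) (A B : I -> I -> C) : A =2 B -> psd A -> psd B.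
Proof.
move=> eAB hA v; have := hA v.
by under eq_bigr => a _ do under eq_bigr => b _ do rewrite eAB.
Qed.

Lemma qformE (I : finType) (A : I -> I -> C) v :
  qform A v = \sum_a (v a)^* * \sum_b A a b * v b.
Proof.
apply: eq_bigr => a _; rewrite mulr_sumr.
by apply: eq_bigr => b _; rewrite mulrA.
Qed.

Lemma qform_mx d (A : 'M[C]_d) v :
  qform A v = ((\row_a (v a)^*) *m A *m (\col_b v b)) 0 0.
Proof.
rewrite /qform !mxE exchange_big /=; apply: eq_bigr => b _.
by rewrite !mxE mulr_suml; apply: eq_bigr => a _; rewrite !mxE.
Qed.

Lemma sum_mul_indicator (I : finType) (f : I -> C) a :
  \sum_b f b * (b == a)%:R = f a.
Proof.
rewrite (bigD1 a) //= eqxx mulr1 big1 ?addr0 // => b /negbTE ->.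
by rewrite mulr0.
Qed.

Lemma qform_pair (I : finType) (A : I -> I -> C) a b (x y : C) :
  qform A (fun c => x * (c == a)%:R + y * (c == b)%:R) =
  x^* * x * A a a + x^* * y * A a b + y^* * x * A b a + y^* * y * A b b.
Proof.
rewrite qformE.
under eq_bigr => c _.
  under eq_bigr => c' _ do rewrite mulrDr !mulrA.
  rewrite big_split /= !sum_mul_indicator rmorphD /= !rmorphM /= !rmorph_nat mulrDl.
  over.
rewrite big_split /=.
under eq_bigr => c _ do rewrite mulrC mulrA.
under [X in _ + X]eq_bigr => c _ do rewrite mulrC mulrA.
by rewrite !sum_mul_indicator; ring.
Qed.

(* Polarization: the real quadratic form is sampled at e_a, e_b, e_a + e_b
   and e_a + i e_b. *)
Lemma psd_hermitian (I : finType) (A : I -> I -> C) :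
  psd A -> forall a b, A b a = (A a b)^*.
Proof.
move=> hA a b.
have real_pair x y : (qform A (fun c => x * (c == a)%:R + y * (c == b)%:R))^* =
                     qform A (fun c => x * (c == a)%:R + y * (c == b)%:R).
  exact/geC0_conj/hA.
have := real_pair 1 0; have := real_pair 0 1.
have := real_pair 1 1; have := real_pair 1 'i.
rewrite !qform_pair !rmorphD /= !rmorphM /= !conjCK conjCi.
rewrite !(rmorph1, rmorph0, mul0r, mulr0, mul1r, mulr1, addr0, add0r, opprK).
move=> hi h1 hbb haa; rewrite hbb haa in hi h1.
have e1 : ((A a b)^* + (A b a)^*) - (A a b + A b a) = 0.
  by move/eqP: h1; rewrite -subr_eq0 => /eqP <-; ring.
have /eqP : 'i * (((A b a)^* - (A a b)^*) - (A a b - A b a)) = 0.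
  by move/eqP: hi; rewrite -subr_eq0 => /eqP <-; ring.
rewrite mulf_eq0 (negbTE (neq0Ci C)) /= => /eqP e2.
have /eqP : ((A b a)^* - A a b) *+ 2 = 0 by rewrite -[RHS]addr0 -{1}e1 -e2; ring.
by rewrite -mulr_natr mulf_eq0 pnatr_eq0 orbF subr_eq0 => /eqP <-; rewrite conjCK.
Qed.

Lemma loewner_leE d (A B : 'M[C]_d) : loewner_le A B <-> psd (B - A).
Proof. by split; apply: eq_psd => a b; rewrite !mxE. Qed.

Lemma loewner_le0 d (A : 'M[C]_d) : loewner_le 0 A <-> psd A.
Proof. by rewrite loewner_leE subr0. Qed.

Lemma effect_psd d (A : 'M[C]_d) : effect A -> psd A.
Proof. by case=> /loewner_le0. Qed.

Lemma qformB d (A B : 'M[C]_d) v : qform (A - B) v = qform A v - qform B v.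
Proof.
rewrite /qform -sumrB; apply: eq_bigr => a _; rewrite -sumrB.
by apply: eq_bigr => b _; rewrite !mxE; ring.
Qed.

Lemma qform_scalar d (t : C) (v : 'I_d -> C) :
  qform (t%:M : 'M[C]_d) v = t * \sum_a `|v a| ^+ 2.
Proof.
rewrite mulr_sumr; apply: eq_bigr => a _.
rewrite (bigD1 a) //= big1 ?addr0 => [|b /negbTE nba]; last first.
  by rewrite mxE eq_sym nba mulr0 mul0r.
by rewrite mxE eqxx mulr1n normCK; ring.
Qed.

Lemma sum_sqr_norm_ge0 (I : finType) (v : I -> C) : 0 <= \sum_a `|v a| ^+ 2.
Proof. by rewrite sumr_ge0 // => a _; rewrite exprn_ge0. Qed.

Lemma psd_scalar d (t : C) : 0 <= t -> psd (t%:M : 'M[C]_d).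
Proof.
move=> t0 v; rewrite -/(qform _ v) qform_scalar.
by rewrite mulr_ge0 ?sum_sqr_norm_ge0.
Qed.

Lemma dotmx_rowE d (u v : 'I_d -> C) :
  dotmx (\row_a u a) (\row_a v a) = \sum_a u a * (v a)^*.
Proof. by rewrite dotmxE mxE; apply: eq_bigr => a _; rewrite !mxE. Qed.

Lemma vnormE d (v : 'I_d -> C) : vnorm v = sqrtC (dotmx (\row_a v a) (\row_a v a)).
Proof.
by rewrite /vnorm dotmx_rowE; congr sqrtC; apply: eq_bigr => a _; rewrite normCK.
Qed.

(* Cauchy-Schwarz: v^* D v <= ||D v|| ||v|| <= t ||v||^2. *)
Lemma psd_opnorm d (D : 'M[C]_d) (t : C) :
  psd D -> opnorm_le D t -> psd (t%:M - D).
Proof.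
move=> hD hDt v; rewrite -/(qform _ v) qformB qform_scalar subr_ge0.
set Dv := fun a => \sum_b D a b * v b.
have qD : qform D v = dotmx (\row_a Dv a) (\row_a v a).
  by rewrite qformE dotmx_rowE; apply: eq_bigr => a _; rewrite mulrC.
have nv : vnorm v * vnorm v = \sum_a `|v a| ^+ 2 by rewrite -expr2 sqrtCK.
have qD0 : 0 <= qform D v := hD v.
rewrite -(ger0_norm qD0) qD.
apply: le_trans (CauchySchwarz_sqrt (@dotmx C d) _ _).1 _.
rewrite -!vnormE -nv mulrA ler_wpM2r ?sqrtC_ge0 ?sum_sqr_norm_ge0 //.
exact: hDt.
Qed.

Local Open Scope sesquilinear_scope.

Definition gram_factor d (A : 'M[C]_d) : 'M[C]_d :=
  \matrix_(k, a) (sqrtC (spectral_diag A 0 k) * (spectralmx A k a)^*).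

(* Spectral theorem: A = U^* diag(lambda) U with U unitary and lambda >= 0. *)
Lemma psd_gram d (A : 'M[C]_d) : psd A ->
  forall a b, A a b = \sum_k gram_factor A k a * (gram_factor A k b)^*.
Proof.
move=> hA.
have /orthomx_spectralP A_diag : A \is normalmx.
  rewrite hermitian_normalmx // is_hermitianmxE expr0 scale1r.
  by apply/eqP/matrixP => a b; rewrite !mxE; apply: psd_hermitian.
set U := spectralmx A in A_diag *; set lam := spectral_diag A in A_diag *.
have U_unitary : U \is unitarymx by apply: spectral_unitarymx.
rewrite invmx_unitary // in A_diag.
have UU : U *m U ^t* = 1%:M by apply/unitarymxP.
have lam_ge0 k : 0 <= lam 0 k.
  have := hA (fun b => (U k b)^*); rewrite -/(qform A _) qform_mx.
  have -> : \row_a ((U k a)^*)^* = delta_mx 0 k *m U.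
    by rewrite -rowE; apply/rowP => a; rewrite !mxE conjCK.
  have -> : \col_b (U k b)^* = U ^t* *m delta_mx k 0.
    by rewrite -colE; apply/colP => b; rewrite !mxE.
  rewrite {1}A_diag !mulmxA -(mulmxA _ U) UU mulmx1 -(mulmxA _ U) UU mulmx1.
  by rewrite -rowE -colE !mxE eqxx mulr1n.
move=> a b; rewrite {1}A_diag mul_mx_diag !mxE; apply: eq_bigr => k _.
have sqrt_real : (sqrtC (lam 0 k))^* = sqrtC (lam 0 k).
  by rewrite geC0_conj ?sqrtC_ge0 ?lam_ge0.
rewrite !mxE rmorphM /= conjCK sqrt_real.
by rewrite -{1}(sqrtCK (lam 0 k)) -/U -/lam; ring.
Qed.

End PositiveSemidefinite.

Section TensorExpectation.
Variables (C : numClosedFieldType) (n d : nat) (rho : tidx n d -> tidx n d -> C).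

Definition tensor_expect (E : 'I_n -> 'M[C]_d) : C :=
  \sum_x \sum_y rho x y * \prod_i E i (y i) (x i).

Lemma eq_tensor_expect (E E' : 'I_n -> 'M[C]_d) :
  (forall i, E i = E' i) -> tensor_expect E = tensor_expect E'.
Proof.
move=> eE; apply: eq_bigr => x _; apply: eq_bigr => y _.
by congr (_ * _); apply: eq_bigr => i _; rewrite eE.
Qed.

Lemma tensor_expect_ge0 (E : 'I_n -> 'M[C]_d) :
  psd rho -> (forall i, psd (E i)) -> 0 <= tensor_expect E.
Proof.
move=> rho_psd E_psd; rewrite /tensor_expect.
under eq_bigr => x _ do under eq_bigr => y _ do
  rewrite (eq_bigr _ (fun i _ => psd_gram (E_psd i) (y i) (x i)))
          bigA_distr_bigA mulr_sumr.
under eq_bigr => x _ do rewrite exchange_big.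
rewrite exchange_big /=; apply: sumr_ge0 => K _.
apply: le_trans (rho_psd (fun x => \prod_i gram_factor (E i) (K i) (x i))) _.
rewrite le_eqVlt; apply/orP; left; apply/eqP.
apply: eq_bigr => x _; apply: eq_bigr => y _.
by rewrite [in RHS]big_split [in LHS]rmorph_prod /=; ring.
Qed.

Lemma tensor_expect_sum (T : finType) (Q : 'I_n -> pred T) (F : 'I_n -> T -> 'M[C]_d) :
  tensor_expect (fun i => \sum_(t | Q i t) F i t) =
  \sum_(w in family Q) tensor_expect (fun i => F i (w i)).
Proof.
rewrite /tensor_expect.
under eq_bigr => x _ do under eq_bigr => y _ do
  rewrite (eq_bigr _ (fun i _ => summxE _ _ _ _ _)) bigA_distr_big_dep mulr_sumr.
under eq_bigr => x _ do rewrite exchange_big.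
by rewrite exchange_big.
Qed.

Lemma tensor_expect_scalar (c : 'I_n -> C) :
  tensor_expect (fun i => (c i)%:M) = (\prod_i c i) * \sum_x rho x x.
Proof.
rewrite mulr_sumr; apply: eq_bigr => x _.
rewrite (bigD1 x) //= [X in _ + X]big1 ?addr0 => [|y ne_yx].
  by rewrite mulrC; congr (_ * _); apply: eq_bigr => i _; rewrite mxE eqxx.
have [i ne_yxi] : exists i, y i != x i.
  apply/existsP; apply: contraNT ne_yx; rewrite negb_exists => /forallP eq_yx.
  by apply/eqP/ffunP => i; apply/eqP/negbNE/eq_yx.
by rewrite (bigD1 i) //= mxE (negbTE ne_yxi) mulr0n mul0r mulr0.
Qed.

End TensorExpectation.

Section CountingMeasurement.
Variables (C : numClosedFieldType) (n d : nat) (rho : tidx n d -> tidx n d -> C).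

Lemma povm_el_refine (T : finType) (F : T -> 'M[C]_d) (S : pred T) (Pi : 'M[C]_d) b :
  \sum_t F t = 1%:M -> \sum_(t | S t) F t = Pi ->
  povm_el Pi b = \sum_(t | S t == b) F t.
Proof.
move=> F1 FS; case: b; first by rewrite -FS; apply: eq_bigl => t; rewrite eqb_id.
rewrite /povm_el -F1 -FS (bigID S) /= addrC addrK.
by apply: eq_bigl => t; rewrite eqbF_neg.
Qed.

Lemma family_support (T : finType) (S : pred T) (s : {set 'I_n}) (w : {ffun 'I_n -> T}) :
  (w \in family (fun i => [pred t | S t == (i \in s)])) = (s == [set i | S (w i)]).
Proof.
apply/familyP/eqP => [w_s | ->]; last by move=> i; rewrite !inE.
by apply/setP => i; rewrite inE; have := w_s i; rewrite inE => /eqP ->.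
Qed.

Lemma probN_refine (T : finType) (F : 'I_n -> T -> 'M[C]_d) (S : pred T)
    (P : 'I_n -> 'M[C]_d) (A : nat -> bool) :
  (forall i, \sum_t F i t = 1%:M) -> (forall i, \sum_(t | S t) F i t = P i) ->
  probN rho P A = \sum_(w : {ffun 'I_n -> T} | A #|[set i | S (w i)]|)
                    tensor_expect rho (fun i => F i (w i)).
Proof.
move=> F1 FS; rewrite /probN.
have refine_outcome s : outcome_prob rho P s =
    \sum_(w in family (fun i => [pred t | S t == (i \in s)]))
      tensor_expect rho (fun i => F i (w i)).
  rewrite -tensor_expect_sum; apply: eq_tensor_expect => i.
  exact: povm_el_refine (F1 i) (FS i).
under eq_bigr => s _ do rewrite refine_outcome.
rewrite (exchange_big_dep xpredT) //= [RHS]big_mkcond; apply: eq_bigr => w _.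
under eq_bigl => s do rewrite family_support.
case: ifP => Aw.
  by rewrite (big_pred1 [set i | S (w i)]) // => s /=; case: (s =P _) => [->|];
    rewrite ?Aw ?andbF.
by rewrite big_pred0 // => s; case: (s =P _) => [->|]; rewrite ?Aw ?andbF.
Qed.

Lemma outcome_prob_scalar (p : C) (s : {set 'I_n}) : \sum_x rho x x = 1 ->
  outcome_prob rho (fun _ => p%:M) s = p ^+ #|s| * (1 - p) ^+ (n - #|s|).
Proof.
move=> tr1.
have -> : outcome_prob rho (fun _ => p%:M) s =
          tensor_expect rho (fun i => (if i \in s then p else 1 - p)%:M).
  by apply: eq_tensor_expect => i; rewrite /povm_el; case: (i \in s); rewrite ?raddfB.
rewrite tensor_expect_scalar tr1 mulr1 big_if /= !prodr_const.
have -> : (n - #|s|)%N = #|~: s| by rewrite [RHS]cardsCs setCK card_ord.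
by congr (_ * _ ^+ _); apply: eq_card => i; rewrite inE.
Qed.

Lemma probN_binomial (p : C) (A : nat -> bool) : \sum_x rho x x = 1 ->
  probN rho (fun _ => p%:M) A =
  \sum_(k < n.+1 | A k) 'C(n, k)%:R * p ^+ k * (1 - p) ^+ (n - k).
Proof.
move=> tr1; rewrite /probN.
under eq_bigr => s _ do rewrite outcome_prob_scalar //.
have card_lt (s : {set 'I_n}) : (#|s| < n.+1)%N.
  by rewrite ltnS (leq_trans (max_card _)) ?card_ord.
rewrite (partition_big (fun s : {set 'I_n} => inord #|s| : 'I_n.+1) (fun k : 'I_n.+1 => A k)) /=;
  last by move=> s As; rewrite inordK.
apply: eq_bigr => k Ak.
rewrite (eq_bigl (fun s => s \in [set s : {set 'I_n} | #|s| == k])); last first.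
  move=> s; rewrite !inE -(inj_eq val_inj) /= inordK //.
  by case: eqP => [->|]; rewrite ?Ak ?andbF.
rewrite (eq_bigr (fun _ => p ^+ k * (1 - p) ^+ (n - k))); last first.
  by move=> s /[!inE] /eqP ->.
by rewrite sumr_const card_draws card_ord -[_ *+ 'C(n, k)]mulr_natl mulrA.
Qed.

End CountingMeasurement.

Section SubPredicateSums.
Variables (R : numDomainType) (T : finType) (f : T -> R).
Hypothesis f_ge0 : forall t, 0 <= f t.

Lemma ler_sum_subpred (p q : pred T) :
  (forall t, p t -> q t) -> \sum_(t | p t) f t <= \sum_(t | q t) f t.
Proof.
move=> pq; rewrite [leLHS]big_mkcond [leRHS]big_mkcond ler_sum // => t _.
by case: (boolP (p t)) => [/pq -> // | _]; case: (q t).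
Qed.

Lemma ler_sum_predU (p q r : pred T) :
  (forall t, r t -> p t || q t) ->
  \sum_(t | r t) f t <= \sum_(t | p t) f t + \sum_(t | q t) f t.
Proof.
move=> rpq; rewrite !(big_mkcond _ f) -big_split ler_sum //= => t _.
case: (boolP (r t)) => [/rpq | _]; last by rewrite addr_ge0 //; case: ifP.
by case: (p t); case: (q t); rewrite //= ?addr0 ?add0r ?lerDl.
Qed.

End SubPredicateSums.

Lemma card_lt2 (I : finType) (w : I -> 'I_3) :
  #|[set i | (val (w i) < 2)%N]| =
  (#|[set i | val (w i) == 0%N]| + #|[set i | val (w i) == 1%N]|)%N.
Proof.
have -> : [set i | (val (w i) < 2)%N] =
          [set i | val (w i) == 0%N] :|: [set i | val (w i) == 1%N].
  by apply/setP => i; rewrite !inE; case: (w i) => [[|[|[|?]]] ?].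
apply/eqP; rewrite (leq_card_setU _ _).2.
by rewrite -setI_eq0; apply/eqP/setP => i; rewrite !inE; case: eqP => // ->.
Qed.

Section LoewnerRefinement.
Variables (C : numClosedFieldType) (n d : nat) (rho : tidx n d -> tidx n d -> C).
Variables (P Q : 'I_n -> 'M[C]_d).
Hypotheses (rho_psd : psd rho) (P_psd : forall i, psd (P i))
  (P_le_Q : forall i, loewner_le (P i) (Q i))
  (Q_le1 : forall i, loewner_le (Q i) 1%:M).

Definition refine3 (X Y Z : 'M[C]_d) (t : 'I_3) : 'M[C]_d :=
  if val t == 0%N then X else if val t == 1%N then Y else Z.

Let F i := refine3 (P i) (Q i - P i) (1%:M - Q i).

Let F_sum i : \sum_t F i t = 1%:M.
Proof. by rewrite !big_ord_recl big_ord0 /F /refine3 /= addr0 addrA !subrKC. Qed.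

Let F_sum_first i : \sum_(t | val t == 0%N) F i t = P i.
Proof. by rewrite big_mkcond !big_ord_recl big_ord0 /F /refine3 /= !addr0. Qed.

Let F_sum_middle i : \sum_(t | val t == 1%N) F i t = Q i - P i.
Proof. by rewrite big_mkcond !big_ord_recl big_ord0 /F /refine3 /= !addr0 add0r. Qed.

Let F_sum_first_two i : \sum_(t | (val t < 2)%N) F i t = Q i.
Proof. by rewrite big_mkcond !big_ord_recl big_ord0 /F /refine3 /= !addr0 subrKC. Qed.

Let F_psd i t : psd (F i t).
Proof.
rewrite /F /refine3; case: ifP => _; first exact: P_psd.
by case: ifP => _; apply/loewner_leE.
Qed.

Let F_expect_ge0 (w : {ffun 'I_n -> 'I_3}) :
  0 <= tensor_expect rho (fun i => F i (w i)).
Proof. exact: tensor_expect_ge0. Qed.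

Lemma probN_le_loewner (A : nat -> bool) :
  (forall k k', (k <= k')%N -> A k -> A k') -> probN rho P A <= probN rho Q A.
Proof.
move=> A_mono.
rewrite (probN_refine _ _ F_sum F_sum_first) (probN_refine _ _ F_sum F_sum_first_two).
apply: (ler_sum_subpred F_expect_ge0) => w; apply: A_mono.
by apply/subset_leq_card/subsetP => i; rewrite !inE => /eqP ->.
Qed.

Lemma probN_le_split (A B B' : nat -> bool) :
  (forall k k', A (k + k')%N -> B k || B' k') ->
  probN rho Q A <= probN rho P B + probN rho (fun i => Q i - P i) B'.
Proof.
move=> A_split.
rewrite (probN_refine _ _ F_sum F_sum_first_two) (probN_refine _ _ F_sum F_sum_first).
rewrite (probN_refine _ _ F_sum F_sum_middle).
by apply: (ler_sum_predU F_expect_ge0) => w; rewrite card_lt2; apply: A_split.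
Qed.

End LoewnerRefinement.

Lemma threshold_mono (R : numFieldType) (n k k' : nat) (t : R) :
  (k <= k')%N -> t <= k%:R / n%:R -> t <= k'%:R / n%:R.
Proof. by move=> kk' /le_trans; apply; apply: ler_wpM2r; rewrite ?invr_ge0 ?ler_nat. Qed.

Lemma real_leD_split (R : numDomainType) (a b x y : R) :
  a \is Num.real -> b \is Num.real -> x \is Num.real -> y \is Num.real ->
  a + b <= x + y -> (a <= x) || (b <= y).
Proof.
move=> aR bR xR yR; apply: contraTT.
by rewrite negb_or -!real_ltNge ?rpredD // => /andP[xa yb]; apply: ltrD.
Qed.

Unset Implicit Arguments.

Theorem lemma10 (C : numClosedFieldType) (n d : nat)
    (rho : tidx n d -> tidx n d -> C)
    (P P' Pt : 'I_n -> 'M[C]_d) (delta c e : C) :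
  (0 < n)%N ->
  0 <= delta -> delta <= 1 ->
  c \is Num.real -> e \is Num.real ->
  density rho ->
  (forall i, effect (P i)) -> (forall i, effect (P' i)) ->
  (forall i, effect (Pt i)) ->
  (forall i, loewner_le (P i) (Pt i)) ->
  (forall i, loewner_le (P' i) (Pt i)) ->
  (forall i, opnorm_le (Pt i - P i) delta) ->
  probN rho P' (fun k => e + delta + c <= k%:R / n%:R)
    <= probN rho P (fun k => e <= k%:R / n%:R) + binom_tail n delta (delta + c).
Proof.
move=> n_gt0 delta_ge0 delta_le1 cR eR [rho_psd tr1] P_eff P'_eff Pt_eff P_Pt P'_Pt D_norm.
have Pt_le1 i := (Pt_eff i).2.
set Ad := fun k : nat => delta + c <= k%:R / n%:R.
have P'_to_Pt : probN rho P' (fun k => e + delta + c <= k%:R / n%:R) <=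
                probN rho Pt (fun k => e + delta + c <= k%:R / n%:R).
  by apply: probN_le_loewner => // [i | k k']; [exact/effect_psd | exact: threshold_mono].
have Pt_split : probN rho Pt (fun k => e + delta + c <= k%:R / n%:R) <=
    probN rho P (fun k => e <= k%:R / n%:R) + probN rho (fun i => Pt i - P i) Ad.
  apply: probN_le_split => // [i | k k']; first exact/effect_psd.
  have fracR m : (m%:R / n%:R : C) \is Num.real by rewrite ger0_real ?divr_ge0.
  rewrite -addrA natrD mulrDl.
  by apply: real_leD_split; rewrite ?fracR ?rpredD ?(ger0_real delta_ge0).
have D_to_delta : probN rho (fun i => Pt i - P i) Ad <= probN rho (fun _ => delta%:M) Ad.
  apply: probN_le_loewner => // [i | i | i | k k'].
  - exact/loewner_leE.
  - by apply/loewner_leE/psd_opnorm; last exact: D_norm; apply/loewner_leE.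
  - by apply/loewner_leE; rewrite -raddfB; apply: psd_scalar; rewrite subr_ge0.
  - exact: threshold_mono.
have binomial : probN rho (fun _ => delta%:M) Ad = binom_tail n delta (delta + c).
  rewrite probN_binomial //; apply: eq_bigl => k.
  by rewrite /Ad ler_pdivlMr ?ltr0n // mulrC.
by apply: le_trans P'_to_Pt (le_trans Pt_split _); rewrite lerD2l -binomial.
Qed.
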